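(* Let $x,k,r$ be positive integers and let $p$ be a prime. Then \[ x^3 + (x+1)^3 + \cdots + (x+k-1)^3 = (p^r)^2 \] holds if and only if $(x,k,p,r) = (p^{2c},1,p,3c)$ for some positive integer $c$, or $(x,k,p,r) = (1,2,3,1)$. *)

From mathcomp Require Import all_boot.

From mathcomp Require Import all_boot.
From mathcomp Require Import zify.

(* Writing S for the sum of x, ..., x + k - 1, the sum of their cubes factors as
   S (S + x (x - 1)).  If it is p^(2r), then S and S + x (x - 1) are both powers
   of p, so S divides x (x - 1).  For k >= 2,
   p divides S, whose double is k (2x + k - 1); since 2x - 1 is coprime to
   x (x - 1), p divides only one of the two factors, and the other one, being
   coprime to p, must divide 2: this forces k = 2.  Then S = 2x + 1 is coprime
   to x and divides x - 1, so x = 1. *)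

Definition consecutive_sum (x k : nat) := \sum_(0 <= i < k) (x + i).

Lemma consecutive_sum_double (x k : nat) :
  2 * consecutive_sum x k = k * (2 * x + k).-1.
Proof.
rewrite /consecutive_sum; elim: k => [|k IHk]; first by rewrite big_geq.
by rewrite big_nat_recr //= mulnDr IHk; nia.
Qed.

Lemma consecutive_cubes_sum (x k : nat) :
  \sum_(0 <= i < k) (x + i) ^ 3 =
  consecutive_sum x k * (consecutive_sum x k + x * x.-1).
Proof.
elim: k => [|k IHk]; first by rewrite /consecutive_sum !big_geq.
have square_step : (x + k) ^ 2 = 2 * consecutive_sum x k + x * x.-1 + (x + k).
  by rewrite consecutive_sum_double; clear IHk; case: x => [|y]; case: k => [|k] /=; nia.
have -> : consecutive_sum x k.+1 = consecutive_sum x k + (x + k).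
  by rewrite /consecutive_sum big_nat_recr.
rewrite big_nat_recr //= IHk (expnS _ 2) square_step.
by move: (consecutive_sum x k) (x * x.-1) (x + k) => S T a; nia.
Qed.

Lemma prime_power_factor_dvd {p m n e : nat} :
  prime p -> m * n = p ^ e -> m <= n -> m %| n.
Proof.
move=> p_pr mn_e le_mn.
have /(dvdn_pfactor _ _ p_pr)[a _ m_a] : m %| p ^ e by rewrite -mn_e dvdn_mulr.
have /(dvdn_pfactor _ _ p_pr)[b _ n_b] : n %| p ^ e by rewrite -mn_e dvdn_mull.
by rewrite m_a n_b dvdn_exp2l // -(leq_exp2l _ _ (prime_gt1 p_pr)) -m_a -n_b.
Qed.

Lemma coprime_mul_pred_double_pred {x : nat} :
  0 < x -> coprime (x * x.-1) (2 * x).-1.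
Proof.
case: x => // y _.
have -> : (2 * y.+1).-1 = 1 * y.+1 + y by lia.
rewrite coprimeMl /coprime gcdnMDl; apply/andP; split.
  by rewrite gcdnC -addn1 gcdnDl gcdn1.
have -> : 1 * y.+1 + y = 2 * y + 1 by lia.
by rewrite gcdnMDl gcdn1.
Qed.

Lemma consecutive_sum_dvd {x k p e : nat} : prime p ->
  \sum_(0 <= i < k) (x + i) ^ 3 = p ^ e -> consecutive_sum x k %| x * x.-1.
Proof.
move=> p_pr; rewrite consecutive_cubes_sum => /(prime_power_factor_dvd p_pr) S_dvd.
by rewrite -(dvdn_addr _ (dvdnn _)) S_dvd ?leq_addr.
Qed.

Lemma dvdn_double_prime_power {d p a : nat} :
  prime p -> ~~ (p %| d) -> d %| 2 * p ^ a -> d <= 2.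
Proof.
move=> p_pr; rewrite -prime_coprime // coprime_sym => /(coprimeXr a) d_coprime.
by rewrite (Gauss_dvdl _ d_coprime) => /(dvdn_leq (isT : 0 < 2)).
Qed.

Lemma cube_eq_prime_power_square {x p r : nat} : prime p ->
  x ^ 3 = (p ^ r) ^ 2 -> exists c, x = p ^ (2 * c) /\ r = 3 * c.
Proof.
move=> p_pr; rewrite -expnM => x3_pr.
have /(dvdn_pfactor _ _ p_pr)[m _ x_pm] : x %| p ^ (r * 2).
  by rewrite -x3_pr dvdn_exp.
move: x3_pr; rewrite x_pm -expnM => /eqP; rewrite eqn_exp2l ?prime_gt1 // => /eqP.
by exists (r - m); split; [congr (_ ^ _)|]; lia.
Qed.

Lemma consecutive_sum_prime_power_length {x k p a : nat} :
  0 < x -> 1 < k -> prime p -> consecutive_sum x k = p ^ a ->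
  p %| x * x.-1 -> k = 2.
Proof.
move=> x_gt0 k_gt1 p_pr S_pa p_dvd_x.
have other_gt2 : 2 < (2 * x + k).-1 by lia.
have other_subk : (2 * x + k).-1 - k = (2 * x).-1 by lia.
have double_sum := consecutive_sum_double x k; rewrite S_pa in double_sum.
have [p_dvd_k | p_ndvd_k] := boolP (p %| k); last first.
  apply/eqP; rewrite eqn_leq k_gt1 andbT.
  by apply: (dvdn_double_prime_power (a := a) p_pr p_ndvd_k); rewrite double_sum dvdn_mulr.
(* p cannot divide both k and 2x + k - 1, since it would divide their difference 2x - 1 *)
have p_ndvd_diff : ~~ (p %| (2 * x).-1).
  rewrite -prime_coprime //.
  exact: coprime_dvdl p_dvd_x (coprime_mul_pred_double_pred x_gt0).
have p_ndvd_other : ~~ (p %| (2 * x + k).-1).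
  by apply: contra p_ndvd_diff => p_dvd_other; rewrite -other_subk dvdn_sub.
suff : (2 * x + k).-1 <= 2 by rewrite leqNgt other_gt2.
by apply: (dvdn_double_prime_power (a := a) p_pr p_ndvd_other); rewrite double_sum dvdn_mull.
Qed.

Lemma consecutive_cubes_prime_power_square {x k p r : nat} :
  0 < x -> 1 < k -> prime p ->
  \sum_(0 <= i < k) (x + i) ^ 3 = (p ^ r) ^ 2 -> x = 1 /\ k = 2.
Proof.
move=> x_gt0 k_gt1 p_pr; rewrite -expnM => sum_pr.
have S_dvd_x := consecutive_sum_dvd p_pr sum_pr.
have /(dvdn_pfactor _ _ p_pr)[a _ S_pa] : consecutive_sum x k %| p ^ (r * 2).
  by rewrite -sum_pr consecutive_cubes_sum dvdn_mulr.
have double_sum := consecutive_sum_double x k.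
have S_gt1 : 1 < consecutive_sum x k by nia.
have a_gt0 : 0 < a by move: S_gt1; rewrite S_pa; case: (a).
have p_dvd_x : p %| x * x.-1.
  by apply: dvdn_trans S_dvd_x; rewrite S_pa dvdn_exp.
have k_2 := consecutive_sum_prime_power_length x_gt0 k_gt1 p_pr S_pa p_dvd_x.
split=> //; subst k.
have S_2x1 : consecutive_sum x 2 = 2 * x + 1 by lia.
have S_coprime_x : coprime (consecutive_sum x 2) x.
  by rewrite S_2x1 coprime_sym /coprime gcdnMDl gcdn1.
move: S_dvd_x; rewrite Gauss_dvdr // S_2x1.
have [|x1_gt0] := posnP x.-1; first lia.
by move=> /(dvdn_leq x1_gt0); lia.
Qed.

Lemma prime_power_eq_prime {p q r : nat} :
  prime p -> prime q -> 0 < r -> p ^ r = q -> p = q /\ r = 1.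
Proof.
move=> p_pr q_pr r_gt0 pr_q.
have /eqP p_q : p == q by rewrite -dvdn_prime2 // -pr_q dvdn_exp.
split=> //; apply/eqP.
by rewrite -(eqn_exp2l _ _ (prime_gt1 p_pr)) expn1 pr_q p_q.
Qed.

Theorem theorem1 (x k p r : nat) :
  0 < x -> 0 < k -> 0 < r -> prime p ->
  (\sum_(0 <= i < k) (x + i) ^ 3 = (p ^ r) ^ 2 <->
   (exists2 c : nat, 0 < c & (x, k, p, r) = (p ^ (2 * c), 1, p, 3 * c))
   \/ (x, k, p, r) = (1, 2, 3, 1)).
Proof.
move=> x_gt0 k_gt0 r_gt0 p_pr; split; last first.
  case=> [[c _ [-> -> ->]]|[-> -> -> ->]].
    by rewrite big_nat1 addn0 -!expnM; congr (_ ^ _); lia.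
  by rewrite /index_iota /= !big_cons big_nil.
have [k_le1 | k_gt1] := leqP k 1.
  have -> : k = 1 by lia.
  rewrite big_nat1 addn0 => /(cube_eq_prime_power_square p_pr)[c [-> r_3c]].
  by left; exists c; [lia | rewrite r_3c].
move=> sum_pr; right.
have [x_1 k_2] := consecutive_cubes_prime_power_square x_gt0 k_gt1 p_pr sum_pr.
subst x k.
have /eqP : (p ^ r) ^ 2 = 3 ^ 2.
  by rewrite -sum_pr /index_iota /= !big_cons big_nil.
by rewrite eqn_exp2r // => /eqP /(prime_power_eq_prime p_pr (isT : prime 3) r_gt0)[-> ->].
Qed.
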